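(* Let $G$ be a connected graph with $n(G)\ge 5$ and $\omega(G)=n(G)-2$. Then $$n(G)-4\le \dim_l(G)\le n(G)-3,$$ where $\dim_l(G)=n(G)-3$ if and only if $G$ is $\{\Gamma_1,\Gamma_2\}$-free, and $\dim_l(G)=n(G)-4$ if and only if $G$ contains an induced subgraph isomorphic to $\Gamma_1$ or $\Gamma_2$.
   Context: All graphs are finite and simple. $n(G)$ is the number of vertices and $\omega(G)$ the clique number of $G$. For vertices $x,y$ of a connected graph $G$, $d_G(x,y)$ is the length of a shortest $x,y$-path. A vertex $w$ distinguishes vertices $u,v$ if $d_G(u,w)\neq d_G(v,w)$. A set $W\subseteq V(G)$ is a local resolving set of $G$ if for every pair of adjacent vertices $u,v\in V(G)\setminus W$ some vertex of $W$ distinguishes $u$ and $v$. The local metric dimension $\dim_l(G)$ is the minimum cardinality of a local resolving set of $G$. $\Gamma_1$ is the graph with vertex set $\{v_1,\dots,v_6\}$ and edge set $\{v_iv_j: i\ne j,\ i,j\in\{1,2,3,4\}\}\cup\{v_1v_5,v_1v_6,v_2v_5,v_3v_6\}$; $\Gamma_2$ is obtained from $\Gamma_1$ by adding the edge $v_5v_6$. A graph is $\{\Gamma_1,\Gamma_2\}$-free if it has no induced subgraph isomorphic to $\Gamma_1$ or to $\Gamma_2$. *)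

From mathcomp Require Import all_boot all_order.
Set Implicit Arguments. Unset Strict Implicit. Unset Printing Implicit Defensive.

Section Graphs.
Variables (T : finType) (e : rel T).

Definition simple_graph : Prop := symmetric e /\ irreflexive e.

Definition connected_graph : Prop := forall x y : T, connect e x y.

Fixpoint ball (k : nat) (x : T) : {set T} :=
  match k with
  | 0 => [set x]
  | k'.+1 => ball k' x :|: [set z | [exists w in ball k' x, e w z]]
  end.

(* d_G(x,y): least k with y in the k-ball of x (for a connected graph this is
   the length of a shortest x,y-path; it is < #|T|). *)
Definition dist (x y : T) : nat := find (fun k => y \in ball k x) (iota 0 #|T|).

Definition is_clique (A : {set T}) : bool :=
  [forall x in A, forall y in A, (x != y) ==> e x y].

Definition clique_number : nat := \max_(A : {set T} | is_clique A) #|A|.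

Definition distinguishes (w u v : T) : bool := dist u w != dist v w.

Definition local_resolving (W : {set T}) : bool :=
  [forall u, forall v, [&& u \notin W, v \notin W & e u v] ==>
                        [exists w in W, distinguishes w u v]].

(* local metric dimension: min cardinality of a local resolving set
   (setT is always local resolving, so the arg min is well defined) *)
Definition local_metric_dim : nat :=
  #|[arg min_(W < [set: T] | local_resolving W) #|W|]|.

Definition has_induced (H : rel 'I_6) : Prop :=
  exists f : 'I_6 -> T, injective f /\ forall i j, e (f i) (f j) = H i j.

End Graphs.

(* Gamma_1 on v1..v6 encoded as 0..5 *)
Definition gamma1_edge (i j : nat) : bool :=
  [|| (i < 4) && (j < 4) && (i != j),
      (i == 0) && (j == 4), (i == 0) && (j == 5),
      (i == 1) && (j == 4) | (i == 2) && (j == 5)].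

Definition Gamma1 : rel 'I_6 := fun i j => gamma1_edge i j || gamma1_edge j i.

Definition Gamma2 : rel 'I_6 :=
  fun i j => Gamma1 i j || ((i == 4 :> nat) && (j == 5 :> nat))
                        || ((i == 5 :> nat) && (j == 4 :> nat)).

Definition Gamma_free (T : finType) (e : rel T) : Prop :=
  ~ has_induced e Gamma1 /\ ~ has_induced e Gamma2.

(* Let K be a maximum clique; exactly two vertices a, b lie outside it.  Two
   vertices of K are at distance 1 from every other vertex of K, so only a and b
   can distinguish them, and for x in K the distance from x to a is determined
   by a single adjacency bit of x (adjacency to a if some vertex of K touches a,
   adjacency to b otherwise).  Hence if U is the complement of a local
   resolving set, then |U| <= 3 as soon as a or b lies in U, and otherwise
   U is contained in K and injects into the four adjacency patterns
   (x ~ a, x ~ b); so |U| <= 4, with equality only if all four patterns occur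
   in K.  Four vertices of K realising the four patterns together with a, b
   induce exactly Gamma1 (a, b non-adjacent) or Gamma2 (a, b adjacent), and
   conversely.  Finally, a suitable U of size 3 always exists. *)

From mathcomp Require Import all_boot all_order.
From mathcomp Require Import zify.
Set Implicit Arguments. Unset Strict Implicit. Unset Printing Implicit Defensive.

Section Distance.
Variables (T : finType) (e : rel T).

Lemma ball_mono j k x : j <= k -> ball e j x \subset ball e k x.
Proof.
move=> /subnK <-; elim: (k - j) => [|i IHi] //=.
exact: subset_trans IHi (subsetUl _ _).
Qed.

Lemma ballSP k x y :
  reflect (y \in ball e k x \/ exists2 w, w \in ball e k x & e w y) (y \in ball e k.+1 x).
Proof.
rewrite /= in_setU in_set; apply: (iffP orP) => [[|/existsP[w /andP[]]]|[|[w]]].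
- by left.
- by right; exists w.
- by left.
- by right; apply/existsP; exists w; apply/andP.
Qed.

Lemma ball_nbr k x w y : e x w -> y \in ball e k w -> y \in ball e k.+1 x.
Proof.
move=> exw; elim: k y => [|k IHk] y.
  by rewrite inE => /eqP ->; apply/ballSP; right; exists x; rewrite ?inE.
case/ballSP => [/IHk /(subsetP (ball_mono x (leqnSn _))) //|[z /IHk zx ezy]].
by apply/ballSP; right; exists z.
Qed.

Lemma ball_nbr_inv k x y :
  y \in ball e k.+1 x -> y = x \/ exists2 w, e x w & y \in ball e k w.
Proof.
elim: k y => [|k IHk] y.
  case/ballSP => [|[w]]; rewrite inE => /eqP ->; first by left.
  by right; exists y; rewrite ?inE.
case/ballSP => [/IHk [-> | [w exw yw]]|[z /IHk [-> exy | [w exw zw] ezy]]].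
- by left.
- by right; exists w => //; apply: (subsetP (ball_mono w (leqnSn _))).
- by right; exists y => //; apply: (subsetP (ball_mono y (leq0n _))); rewrite inE.
- by right; exists w => //; apply/ballSP; right; exists z.
Qed.

Lemma dist_leq_card x y : dist e x y <= #|T|.
Proof. by rewrite /dist -[X in _ <= X](size_iota 0 #|T|) find_size. Qed.

Lemma dist_leq_ball k x y : k < #|T| -> (dist e x y <= k) = (y \in ball e k x).
Proof.
move=> kT; apply/idP/idP => [le_dk | ykx].
  have dT : dist e x y < size (iota 0 #|T|) by rewrite size_iota; lia.
  have := nth_find 0 (a := fun k => y \in ball e k x) (s := iota 0 #|T|).
  rewrite has_find dT nth_iota ?add0n; last by rewrite size_iota in dT.
  by move=> /(_ isT); apply: (subsetP (ball_mono x le_dk)).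
rewrite leqNgt; apply/negP => /(before_find 0).
by rewrite nth_iota // add0n ykx.
Qed.

Lemma dist_nbr_leq x w y : e x w -> dist e x y <= (dist e w y).+1.
Proof.
move=> exw; have := dist_leq_card x y.
case: (ltnP (dist e w y).+1 #|T|) => [dT _ | ]; last by lia.
rewrite dist_leq_ball //; apply: ball_nbr exw _.
by rewrite -dist_leq_ball; lia.
Qed.

Lemma dist_nbr_geq k x y : k.+1 < #|T| -> x != y ->
  (forall w, e x w -> k <= dist e w y) -> k < dist e x y.
Proof.
move=> kT xy far; rewrite ltnNge dist_leq_ball; last by lia.
case: k kT far => [|k] kT far.
  by rewrite inE eq_sym (negPf xy).
apply/negP => /ball_nbr_inv [/eqP | [w exw yw]]; first by rewrite eq_sym (negPf xy).
by have := far w exw; rewrite ltnNge dist_leq_ball ?yw //; lia.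
Qed.

Lemma dist_gt0 x y : 1 < #|T| -> x != y -> 0 < dist e x y.
Proof. by move=> T1 xy; apply: dist_nbr_geq. Qed.

Lemma dist_nonadj x y : 2 < #|T| -> x != y -> ~~ e x y -> 1 < dist e x y.
Proof.
move=> T2 xy nexy; apply: dist_nbr_geq => // w exw.
by apply: dist_gt0; [lia | apply: contraNneq nexy => <-].
Qed.
End Distance.

Section SimpleDistance.
Variables (T : finType) (e : rel T).
Hypothesis eirr : irreflexive e.

Lemma adj_neq x y : e x y -> x != y.
Proof. by apply: contraTneq => ->; rewrite eirr. Qed.

Lemma dist_adj x y : 1 < #|T| -> e x y -> dist e x y = 1.
Proof.
move=> T1 exy; apply/eqP; rewrite eqn_leq dist_gt0 ?adj_neq // andbT.
by rewrite dist_leq_ball //; apply: ball_nbr exy _; rewrite inE.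
Qed.

Lemma adj_distinguishes x y w : 2 < #|T| -> w != x -> w != y ->
  e x w != e y w -> distinguishes e w x y.
Proof.
move=> T2 wx wy; have T1 := ltnW T2; rewrite /distinguishes.
have [exw|nexw] := boolP (e x w); have [eyw|neyw] := boolP (e y w) => // _.
  by rewrite (dist_adj T1 exw) ltn_eqF // dist_nonadj // eq_sym.
by rewrite (dist_adj T1 eyw) eq_sym ltn_eqF // dist_nonadj // eq_sym.
Qed.
End SimpleDistance.

Lemma local_resolvingP (T : finType) (e : rel T) (W : {set T}) :
  reflect (forall u v, u \notin W -> v \notin W -> e u v ->
             exists2 w, w \in W & distinguishes e w u v)
          (local_resolving e W).
Proof.
apply: (iffP forallP) => [lrW u v uW vW euv | lrW u].
  by have /forallP/(_ v) := lrW u; rewrite uW vW euv => /existsP[w /andP[]]; exists w.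
apply/forallP => v; apply/implyP => /and3P[uW vW euv].
by have [w wW dw] := lrW u v uW vW euv; apply/existsP; exists w; apply/andP.
Qed.

Lemma local_resolvingT (T : finType) (e : rel T) : local_resolving e [set: T].
Proof. by apply/local_resolvingP => u v; rewrite inE. Qed.

Lemma local_metric_dim_min (T : finType) (e : rel T) (W : {set T}) :
  local_resolving e W -> local_metric_dim e <= #|W|.
Proof.
rewrite /local_metric_dim; case: arg_minnP => [|W0 _ minW0]; first exact: local_resolvingT.
exact: minW0.
Qed.

Lemma local_metric_dim_attained (T : finType) (e : rel T) :
  exists2 W : {set T}, local_resolving e W & #|W| = local_metric_dim e.
Proof.
rewrite /local_metric_dim; case: arg_minnP => [|W0 lrW0 _]; first exact: local_resolvingT.
by exists W0.
Qed.

Lemma local_resolving_setC (T : finType) (e : rel T) (U : {set T}) :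
  (forall u v, u \in U -> v \in U -> e u v -> exists2 w, w \notin U & distinguishes e w u v) ->
  local_resolving e (~: U).
Proof.
move=> resU; apply/local_resolvingP => u v; rewrite !inE !negbK => uU vU euv.
by have [w wU dw] := resU u v uU vU euv; exists w; rewrite ?inE.
Qed.

Lemma distinguishesC (T : finType) (e : rel T) w u v :
  distinguishes e w u v = distinguishes e w v u.
Proof. by rewrite /distinguishes eq_sym. Qed.

Lemma cards3 (T : finType) (x y z : T) :
  x != y -> x != z -> y != z -> #|[set x; y; z]| = 3.
Proof. by move=> xy xz yz; rewrite setUC !cardsU1 cards1 !inE negb_or !(eq_sym z) xy xz yz. Qed.

Lemma cliqueP (T : finType) (e : rel T) (C : {set T}) :
  reflect {in C &, forall x y, x != y -> e x y} (is_clique e C).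
Proof.
apply: (iffP forallP) => [clC x y xC yC | clC x].
  by have /implyP/(_ xC)/forallP/(_ y)/implyP/(_ yC)/implyP := clC x.
by apply/implyP => xC; apply/forallP => y; apply/implyP => yC; apply/implyP; apply: clC.
Qed.

Lemma maximum_clique_exists (T : finType) (e : rel T) :
  exists K : {set T}, [/\ is_clique e K, #|K| = clique_number e &
                          forall C, is_clique e C -> #|C| <= #|K|].
Proof.
rewrite /clique_number.
have [|K clK maxE] := @eq_bigmax_cond _ [pred A : {set T} | is_clique e A] (fun A => #|A|).
  by apply/card_gt0P; exists set0; rewrite inE; apply/cliqueP => x y; rewrite inE.
exists K; rewrite -maxE; split=> // C clC.
exact: (@leq_bigmax_cond _ [pred A : {set T} | is_clique e A] (fun A => #|A|) C clC).
Qed.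

Lemma connected_closed (T : finType) (e : rel T) (S : {set T}) x y :
  connected_graph e -> (forall u v, u \in S -> e u v -> v \in S) -> x \in S -> y \in S.
Proof.
move=> /(_ x y) /connectP [p + ->] closedS; elim: p x => [|z p IHp] x //= /andP[exz pz] xS.
exact: IHp pz (closedS x z xS exz).
Qed.

Local Notation vtx k := (@Ordinal 6 k isT).

Lemma Gamma2_Gamma1 (i j : 'I_6) : (i < 4) || (j < 4) -> Gamma2 i j = Gamma1 i j.
Proof.
by case: i j => [[|[|[|[|[|[|i]]]]]] ?] [[|[|[|[|[|[|j]]]]]] ?]; rewrite /Gamma2 /= ?orbF.
Qed.

Definition K4_vertex (s : bool * bool) : 'I_6 :=
  match s with
  | (true, true) => vtx 0 | (true, false) => vtx 1
  | (false, true) => vtx 2 | (false, false) => vtx 3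
  end.

Lemma K4_vertexP s :
  [/\ K4_vertex s < 4, Gamma1 (K4_vertex s) (vtx 4) = s.1 & Gamma1 (K4_vertex s) (vtx 5) = s.2].
Proof. by case: s => [[] []]; split. Qed.

Section MaximumClique.
Variables (T : finType) (e : rel T).
Hypotheses (esym : symmetric e) (eirr : irreflexive e) (conn : connected_graph e).
Variable K : {set T}.
Hypotheses (clK : is_clique e K) (maxK : forall C, is_clique e C -> #|C| <= #|K|).
Hypothesis K_gt1 : 1 < #|K|.

Lemma clique_adj x y : x \in K -> y \in K -> x != y -> e x y.
Proof. by move/cliqueP: clK; apply. Qed.

Let K_inhabited : exists x, x \in K.
Proof. by apply/card_gt0P; apply: ltnW. Qed.

Definition adjK c := [exists z in K, e z c].

Definition dist_bit c d x := if adjK c then e x c else e x d.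

Section Outside.
Variables c d : T.
Hypotheses (cd : c != d) (Kcd : ~: K = [set c; d]).

Lemma outside_K x : (x \notin K) = (x == c) || (x == d).
Proof. by rewrite -in_setC Kcd !inE. Qed.

Lemma c_notin_K : c \notin K. Proof. by rewrite outside_K eqxx. Qed.

Lemma K_neq_c x : x \in K -> x != c.
Proof. by apply: contraTneq => ->; rewrite c_notin_K. Qed.

Lemma card_T : #|T| = #|K| + 2.
Proof. by rewrite -(cardsC K) Kcd cards2 cd. Qed.

Lemma exists_nonnbr : exists2 w, w \in K & ~~ e w c.
Proof.
case: (boolP [forall w in K, e w c]) => [/forall_inP adjc|]; last first.
  by rewrite negb_forall_in => /exists_inP.
suff /maxK : is_clique e (c |: K) by rewrite cardsU1 c_notin_K add1n ltnn.
apply/cliqueP => x y; rewrite !inE.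
case/predU1P => [->|xK] /predU1P[->|yK]; rewrite ?eqxx // => xy.
- by rewrite esym; apply: adjc.
- exact: adjc.
- exact: clique_adj.
Qed.

Lemma nonadjK_nonadj x : ~~ adjK c -> x \in K -> ~~ e x c.
Proof. by move=> /exists_inPn; apply. Qed.

Lemma nonadjK_adj_other : ~~ adjK c -> e c d.
Proof.
move=> nc; apply/contraT => ncd.
have [x xK] := K_inhabited.
suff : x \in [set c] by rewrite inE => /eqP xc; rewrite xc (negPf c_notin_K) in xK.
apply: connected_closed conn _ (set11 c) => u v /set1P -> ecv.
have : v \notin K by apply: contraL ecv => vK; rewrite esym nonadjK_nonadj.
by rewrite outside_K => /orP[] /eqP vcd; rewrite vcd ?eirr ?(negPf ncd) in ecv.
Qed.

Lemma nonadjK_adjK_other : ~~ adjK c -> adjK d.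
Proof.
move=> nc; apply/contraT => nd.
have [x xK] := K_inhabited.
suff : x \in [set c; d] by rewrite -Kcd inE xK.
apply: connected_closed conn _ (set21 c d) => u v ucd euv.
rewrite -Kcd inE; apply: contraL euv => vK; rewrite esym.
by case/set2P: ucd => ->; [move: nc | move: nd] => /exists_inPn; apply.
Qed.

Lemma T_gt3 : 3 < #|T|.
Proof. by rewrite card_T addn2 !ltnS. Qed.

Lemma dist_K_outside x : x \in K ->
  dist e x c = if adjK c then (if e x c then 1 else 2) else (if e x d then 2 else 3).
Proof.
move=> xK; have T2 : 2 < #|T| := ltnW T_gt3; have T1 : 1 < #|T| := ltnW T2.
have xc := K_neq_c xK.
case: ifP => [/exists_inP[z zK ezc] | /negbT nc].
  case: ifP => [exc | /negbT nexc]; first exact: dist_adj.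
  apply/eqP; rewrite eqn_leq dist_nonadj ?andbT //.
  have xz : x != z by apply: contraNneq nexc => ->.
  by apply: leq_trans (dist_nbr_leq _ (clique_adj xK zK xz)) _; rewrite (dist_adj eirr T1 ezc).
have edc : e d c by rewrite esym nonadjK_adj_other.
have nexc := nonadjK_nonadj nc xK.
case: ifP => [exd | /negbT nexd].
  apply/eqP; rewrite eqn_leq dist_nonadj ?andbT //.
  by apply: leq_trans (dist_nbr_leq _ exd) _; rewrite (dist_adj eirr T1 edc).
have [y yK eyd] := exists_inP (nonadjK_adjK_other nc).
have xy : x != y by apply: contraNneq nexd => ->.
apply/eqP; rewrite eqn_leq; apply/andP; split.
  apply: leq_trans (dist_nbr_leq _ (clique_adj xK yK xy)) _.
  by apply: leq_trans (dist_nbr_leq _ eyd) _; rewrite (dist_adj eirr T1 edc).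
apply: (dist_nbr_geq T_gt3 xc) => w exw.
have wK : w \in K.
  by rewrite -[w \in K]negbK outside_K; apply/norP; split;
    [apply: contraNneq nexc | apply: contraNneq nexd] => <-.
by apply: (dist_nonadj T2); [apply: K_neq_c | apply: nonadjK_nonadj].
Qed.

Lemma dist_bit_dist x y : x \in K -> y \in K ->
  dist_bit c d x = dist_bit c d y -> dist e x c = dist e y c.
Proof. by move=> xK yK; rewrite !dist_K_outside // /dist_bit; case: adjK => ->. Qed.

Lemma K_pair_resolved W x y : local_resolving e W ->
  x \in K -> y \in K -> x \notin W -> y \notin W -> x != y ->
  (c \in W) && (dist e x c != dist e y c) || (d \in W) && (dist e x d != dist e y d).
Proof.
move=> /local_resolvingP lrW xK yK xW yW xy.
have [w wW] := lrW x y xW yW (clique_adj xK yK xy); rewrite /distinguishes.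
have [wK|] := boolP (w \in K); last by rewrite outside_K => /orP[] /eqP <- ->; rewrite wW ?orbT.
have wx : x != w by apply: contraNneq xW => ->.
have wy : y != w by apply: contraNneq yW => ->.
by rewrite !(dist_adj eirr (ltnW (ltnW T_gt3)) (clique_adj _ wK _)).
Qed.

Lemma compl_card_le3 W : local_resolving e W -> d \notin W -> #|~: W| <= 3.
Proof.
move=> lrW dW.
have resolved x y : x \in ~: W :&: K -> y \in ~: W :&: K -> x != y ->
    (c \in W) && (dist_bit c d x != dist_bit c d y).
  rewrite !inE => /andP[xW xK] /andP[yW yK] xy.
  have := K_pair_resolved lrW xK yK xW yW xy; rewrite (negPf dW) orbF.
  by case/andP=> ->; apply: contra => /eqP /dist_bit_dist ->.
rewrite -(cardsID K (~: W)).
case cW: (c \in W).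
  apply: (@leq_add _ _ 2 1).
    rewrite -card_bool; apply: (@leq_card_in _ _ (dist_bit c d)) => x y xU yU sxy.
    by apply/eqP/contraT => /(resolved x y xU yU); rewrite sxy eqxx andbF.
  rewrite -(cards1 d); apply/subset_leq_card/subsetP => u.
  by rewrite !inE outside_K => /andP[/orP[] /eqP -> //]; rewrite cW.
apply: (@leq_add _ _ 1 2).
  rewrite -card_unit; apply: (@leq_card_in _ _ (fun=> tt)) => x y xU yU _.
  by apply/eqP/contraT => /(resolved x y xU yU); rewrite cW.
apply: (@leq_trans #|~: K|); last by rewrite Kcd cards2 cd.
by apply/subset_leq_card/subsetP => u; rewrite !inE => /andP[].
Qed.
End Outside.

Variables a b : T.
Hypotheses (ab : a != b) (Kab : ~: K = [set a; b]).

Let ba : b != a. Proof. by rewrite eq_sym. Qed.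
Let Kba : ~: K = [set b; a]. Proof. by rewrite setUC. Qed.

Let T_gt2 : 2 < #|T|. Proof. exact: ltnW (T_gt3 ab Kab). Qed.

Definition adj_pattern x := (e x a, e x b).

Definition all_patterns := forall s, exists2 x, x \in K & adj_pattern x = s.

Lemma adj_pattern_dist x y : x \in K -> y \in K -> adj_pattern x = adj_pattern y ->
  dist e x a = dist e y a /\ dist e x b = dist e y b.
Proof.
move=> xK yK [exa exb].
by split; [apply: (dist_bit_dist ab Kab) | apply: (dist_bit_dist ba Kba)];
  rewrite // /dist_bit exa exb.
Qed.

Lemma adj_pattern_distinguishes u v : u \in K -> v \in K -> adj_pattern u != adj_pattern v ->
  distinguishes e a u v || distinguishes e b u v.
Proof.
move=> uK vK; rewrite xpair_eqE negb_and => /orP[nea | neb].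
  by apply/orP; left; apply: adj_distinguishes; rewrite // eq_sym (K_neq_c Kab).
by apply/orP; right; apply: adj_distinguishes; rewrite // eq_sym (K_neq_c Kba).
Qed.

Lemma compl_adj_pattern_inj W : local_resolving e W -> a \in W -> b \in W ->
  ~: W \subset K /\ {in ~: W &, injective adj_pattern}.
Proof.
move=> lrW aW bW.
have UK : ~: W \subset K.
  apply/subsetP => x; rewrite inE; apply: contraR.
  by rewrite (outside_K Kab) => /orP[] /eqP ->.
split=> // x y xU yU pxy; apply/eqP/contraT => xy.
have xK := subsetP UK x xU; have yK := subsetP UK y yU.
have [dxa dxb] := adj_pattern_dist xK yK pxy; move: xU yU; rewrite !inE => xW yW.
by have := K_pair_resolved ab Kab lrW xK yK xW yW xy; rewrite dxa dxb !eqxx !andbF.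
Qed.

Lemma compl_card_gt3 W : local_resolving e W -> 3 < #|~: W| -> a \in W /\ b \in W.
Proof.
move=> lrW gt3; split; apply/contraT.
- by move=> /(compl_card_le3 ba Kba lrW); rewrite leqNgt gt3.
- by move=> /(compl_card_le3 ab Kab lrW); rewrite leqNgt gt3.
Qed.

Lemma compl_card_le4 W : local_resolving e W -> #|~: W| <= 4.
Proof.
move=> lrW; case: (leqP #|~: W| 3) => [/leqW // | /(compl_card_gt3 lrW) [aW bW]].
have [_ inj] := compl_adj_pattern_inj lrW aW bW.
by have := leq_card_in _ _ inj; rewrite card_prod card_bool.
Qed.

Lemma compl_card4_all_patterns W : local_resolving e W -> #|~: W| = 4 -> all_patterns.
Proof.
move=> lrW U4; have [|aW bW] := compl_card_gt3 lrW; first by rewrite U4.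
have [UK inj] := compl_adj_pattern_inj lrW aW bW.
have imT : [set adj_pattern x | x in ~: W] = setT.
  by apply/eqP; rewrite eqEcard subsetT card_in_imset // cardsT card_prod card_bool U4.
move=> s; have : s \in [set adj_pattern x | x in ~: W] by rewrite imT inE.
by case/imsetP => x xU ->; exists x => //; apply: (subsetP UK).
Qed.

Lemma all_patterns_resolving4 :
  all_patterns -> exists W, local_resolving e W /\ #|~: W| = 4.
Proof.
move=> /fin_all_exists2[g gK gP].
pose U := [set g s | s : bool * bool].
have UK : U \subset K by apply/subsetP => _ /imsetP[s _ ->].
exists (~: U); split; last first.
  by rewrite setCK card_imset ?cardsT ?card_prod ?card_bool //; apply: can_inj gP.
apply: local_resolving_setC => _ _ /imsetP[s _ ->] /imsetP[t _ ->] est.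
have pst : adj_pattern (g s) != adj_pattern (g t).
  by rewrite !gP; apply: contraTneq est => ->; rewrite eirr.
case/orP: (adj_pattern_distinguishes (gK s) (gK t) pst) => dst; [exists a | exists b] => //.
  by apply: contra (c_notin_K Kab) => /(subsetP UK).
by apply: contra (c_notin_K Kba) => /(subsetP UK).
Qed.

Lemma nontwins_resolving3 z : z \in K -> (e a b -> e z a != e z b) ->
  exists W, local_resolving e W /\ #|~: W| = 3.
Proof.
move=> zK zab.
have [x xK xz] : exists2 x, x \in K & x != z.
  have /card_gt1P[u [v [uK vK uv]]] := K_gt1.
  by case: (eqVneq u z) => [uz | ]; [exists v; rewrite // -uz eq_sym | exists u].
have nbr_resolved c d : ~: K = [set c; d] -> e x c ->
    exists2 w, w \notin [set x; a; b] & distinguishes e w x c.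
  move=> Kcd exc; have [w wK nwc] := exists_nonnbr Kcd.
  have wx : w != x by apply: contraNneq nwc => ->.
  exists w; first by rewrite !inE !negb_or wx (K_neq_c Kab wK) (K_neq_c Kba wK).
  have xw : x != w by rewrite eq_sym.
  apply: adj_distinguishes; rewrite // ?(K_neq_c Kcd wK) ?(clique_adj xK wK xw) //.
  by rewrite esym (negPf nwc).
have z_resolves : e a b -> exists2 w, w \notin [set x; a; b] & distinguishes e w a b.
  move=> eab; exists z.
    by rewrite !inE !negb_or (eq_sym z x) xz (K_neq_c Kab zK) (K_neq_c Kba zK).
  by apply: adj_distinguishes; rewrite ?(K_neq_c Kab zK) ?(K_neq_c Kba zK) // !(esym _ z) zab.
exists (~: [set x; a; b]); split; last first.
  by rewrite setCK cards3 ?(K_neq_c Kab xK) ?(K_neq_c Kba xK).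
have resolvedC u v : (exists2 w, w \notin [set x; a; b] & distinguishes e w u v) ->
    exists2 w, w \notin [set x; a; b] & distinguishes e w v u.
  by case=> w wU duv; exists w; rewrite // distinguishesC.
apply: local_resolving_setC => u v; rewrite !inE -!orbA.
case/or3P=> /eqP-> /or3P[]/eqP-> euv; try by rewrite eirr in euv.
- exact: nbr_resolved Kab euv.
- exact: nbr_resolved Kba euv.
- by apply: resolvedC; apply: nbr_resolved Kab _; rewrite esym.
- exact: z_resolves euv.
- by apply: resolvedC; apply: nbr_resolved Kba _; rewrite esym.
- by apply: resolvedC; apply: z_resolves; rewrite esym.
Qed.

Lemma twins_resolving3 : e a b -> {in K, forall z, e z a = e z b} ->
  exists W, local_resolving e W /\ #|~: W| = 3.
Proof.
move=> eab twin.
have [x xK exa] : exists2 x, x \in K & e x a.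
  have [/exists_inP[x xK exa] | /(nonadjK_adjK_other Kab)/exists_inP[x xK exb]] := boolP (adjK a).
    by exists x.
  by exists x; rewrite ?twin.
pose N := K :&: [set z | e z a].
(* a, b and their common neighbours in K form a clique, so at least two
   vertices of K miss a. *)
have : #|N| + 2 <= #|N| + #|K :\: [set z | e z a]|.
  rewrite cardsID addn2; apply: (leq_trans _ (maxK (C := a |: (b |: N)) _)).
    by rewrite !cardsU1 !inE (negPf ab) (negPf (c_notin_K Kab)) (negPf (c_notin_K Kba)).
  apply/cliqueP => u v; rewrite !inE.
  case/or3P=> [/eqP-> | /eqP-> | /andP[uK ua]] /or3P[/eqP-> | /eqP-> | /andP[vK va]];
    rewrite ?eqxx // => uv.
  - by rewrite esym.
  - by rewrite esym.
  - by rewrite esym -(twin v vK).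
  - by rewrite -(twin u uK).
  - exact: clique_adj uK vK uv.
rewrite leq_add2l => /card_gt1P[y [y' []]].
rewrite !inE => /andP[nya yK] /andP[ny'a y'K] yy'.
have xy : x != y by apply: contraNneq nya => <-.
have y'x : y' != x by apply: contraNneq ny'a => ->.
have aU : a \notin [set x; y; b].
  by rewrite !inE !negb_or (eq_sym a x) (eq_sym a y) (K_neq_c Kab xK) (K_neq_c Kab yK).
have y'U : y' \notin [set x; y; b].
  by rewrite !inE !negb_or y'x eq_sym yy' (K_neq_c Kba y'K).
have dxy : distinguishes e a x y.
  by apply: adj_distinguishes; rewrite ?(eq_sym a) ?(K_neq_c Kab xK) ?(K_neq_c Kab yK) // exa.
have dxb : distinguishes e y' x b.
  apply: adj_distinguishes; rewrite ?(K_neq_c Kba y'K) //.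
  by rewrite (clique_adj xK y'K) 1?eq_sym // esym -twin // (negPf ny'a).
have neyb : ~~ e y b by rewrite -twin.
exists (~: [set x; y; b]); split; last first.
  by rewrite setCK cards3 ?(K_neq_c Kba xK) ?(K_neq_c Kba yK).
apply: local_resolving_setC => u v; rewrite !inE -!orbA.
case/or3P=> /eqP-> /or3P[]/eqP-> euv; try by rewrite eirr in euv.
- by exists a.
- by exists y'.
- by exists a; rewrite // distinguishesC.
- by rewrite euv in neyb.
- by exists y'; rewrite // distinguishesC.
- by rewrite esym euv in neyb.
Qed.

Lemma exists_resolving3 : exists W, local_resolving e W /\ #|~: W| = 3.
Proof.
have [/exists_inP[z zK /implyP] | ] := boolP [exists z in K, e a b ==> (e z a != e z b)].
  exact: nontwins_resolving3.
rewrite negb_exists_in => /forall_inP twins.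
have twin_ab z : z \in K -> e a b && (e z a == e z b).
  by move=> /twins; rewrite negb_imply negbK.
have [z zK] := K_inhabited.
apply: twins_resolving3 => [|y /twin_ab /andP[_ /eqP] //].
by case/andP: (twin_ab z zK).
Qed.

Lemma induced_all_patterns (G : rel 'I_6) :
  (forall i j : 'I_6, (i < 4) || (j < 4) -> G i j = Gamma1 i j) ->
  has_induced e G -> all_patterns.
Proof.
move=> GG1 [f [f_inj fG]].
have out_of_nonadj i j : i != j -> G i j = false -> f i \in K -> f j \notin K.
  move=> ij Gij fiK; apply: contraFN Gij => fjK.
  by rewrite -fG clique_adj // (inj_eq f_inj).
have no_three_out i j k : i != j -> i != k -> j != k ->
    f i \notin K -> f j \notin K -> f k \notin K -> False.
  move=> ij ik jk fi fj fk.
  have : #|[set f i; f j; f k]| <= #|~: K|.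
    by apply/subset_leq_card/subsetP => u; rewrite !inE -orbA => /or3P[]/eqP->.
  by rewrite cards3 ?(inj_eq f_inj) // Kab cards2 ab.
have f4 : f (vtx 4) \notin K.
  apply/negP => f4K.
  have f2 := out_of_nonadj (vtx 4) (vtx 2) isT (GG1 (vtx 4) (vtx 2) isT) f4K.
  have f3 := out_of_nonadj (vtx 4) (vtx 3) isT (GG1 (vtx 4) (vtx 3) isT) f4K.
  have [f5K | f5] := boolP (f (vtx 5) \in K); last exact: (no_three_out (vtx 2) (vtx 3) (vtx 5)).
  have f1 := out_of_nonadj (vtx 5) (vtx 1) isT (GG1 (vtx 5) (vtx 1) isT) f5K.
  exact: (no_three_out (vtx 1) (vtx 2) (vtx 3)).
have f5 : f (vtx 5) \notin K.
  apply/negP => f5K.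
  have f1 := out_of_nonadj (vtx 5) (vtx 1) isT (GG1 (vtx 5) (vtx 1) isT) f5K.
  have f3 := out_of_nonadj (vtx 5) (vtx 3) isT (GG1 (vtx 5) (vtx 3) isT) f5K.
  exact: (no_three_out (vtx 1) (vtx 3) (vtx 4)).
have fK (i : 'I_6) : i < 4 -> f i \in K.
  move=> lt4; apply/negPn/negP => fi.
  by apply: (no_three_out i (vtx 4) (vtx 5)) => //; apply: contraTneq lt4 => ->.
have f45 : f (vtx 4) != f (vtx 5) by rewrite (inj_eq f_inj).
move=> s; have [lt4 G4 G5] := K4_vertexP s; have [lt4' G4' G5'] := K4_vertexP (s.2, s.1).
move: f4 f5 f45; rewrite !(outside_K Kab).
case/orP=> /eqP fa /orP[]/eqP fb; rewrite fa fb ?eqxx // => _.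
- exists (f (K4_vertex s)); first exact: fK.
  by rewrite /adj_pattern -fa -fb !fG !GG1 ?lt4 // G4 G5 -surjective_pairing.
- exists (f (K4_vertex (s.2, s.1))); first exact: fK.
  by rewrite /adj_pattern -fa -fb !fG !GG1 ?lt4' // G4' G5' /= -surjective_pairing.
Qed.

Lemma all_patterns_induced :
  all_patterns -> has_induced e Gamma1 \/ has_induced e Gamma2.
Proof.
move=> /fin_all_exists2[g gK gP].
have g_inj : injective g := can_inj gP.
have gg s t : e (g s) (g t) = (s != t).
  have [<-|st] := eqVneq s t; first exact: eirr.
  by rewrite clique_adj // (inj_eq g_inj).
have ga s : e (g s) a = s.1 by rewrite -[in RHS](gP s).
have gb s : e (g s) b = s.2 by rewrite -[in RHS](gP s).
have ag s : e a (g s) = s.1 by rewrite esym.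
have bg s : e b (g s) = s.2 by rewrite esym.
pose vs := [:: g (true, true); g (true, false); g (false, true); g (false, false); a; b].
pose f (i : 'I_6) := nth a vs i.
have f_inj : injective f.
  move=> i j /eqP; rewrite /f nth_uniq ?size_tuple // => [/eqP/val_inj //|].
  by rewrite /= !inE !negb_or !(inj_eq g_inj) !(K_neq_c Kab (gK _)) !(K_neq_c Kba (gK _)) ab.
case eab: (e a b); [right | left]; exists f; split=> //;
  case=> [[|[|[|[|[|[|i]]]]]] Hi] [[|[|[|[|[|[|j]]]]]] Hj] //;
  by rewrite /f /= ?gg ?ga ?gb ?ag ?bg ?eirr ?eab // esym eab.
Qed.

Lemma local_metric_dim_bounds : #|T| - 4 <= local_metric_dim e <= #|T| - 3.
Proof.
have [W lrW dimW] := local_metric_dim_attained e.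
have [W3 [lrW3 W3c]] := exists_resolving3.
apply/andP; split; first by rewrite -dimW cardsCs; apply/leq_sub2l/compl_card_le4.
by apply: leq_trans (local_metric_dim_min lrW3) _; rewrite cardsCs W3c.
Qed.

Lemma local_metric_dim_eq4 : local_metric_dim e = #|T| - 4 <-> all_patterns.
Proof.
split=> [|/all_patterns_resolving4[W [lrW Wc]]].
  have [W lrW dimW] := local_metric_dim_attained e => dim4.
  apply: (compl_card4_all_patterns lrW).
  by rewrite cardsCs setCK dimW dim4 subKn //; apply: T_gt3 ab Kab.
apply/eqP; rewrite eqn_leq; case/andP: local_metric_dim_bounds => -> _; rewrite andbT.
by apply: leq_trans (local_metric_dim_min lrW) _; rewrite cardsCs Wc.
Qed.

Lemma all_patterns_iff_induced :
  all_patterns <-> has_induced e Gamma1 \/ has_induced e Gamma2.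
Proof.
split=> [|[]]; first exact: all_patterns_induced.
  exact: (induced_all_patterns (fun _ _ _ => erefl)).
exact: (induced_all_patterns Gamma2_Gamma1).
Qed.
End MaximumClique.

Theorem corollary2p5 (T : finType) (e : rel T) :
  simple_graph e -> connected_graph e ->
  5 <= #|T| -> clique_number e = #|T| - 2 ->
  [/\ #|T| - 4 <= local_metric_dim e <= #|T| - 3,
      local_metric_dim e = #|T| - 3 <-> Gamma_free e &
      local_metric_dim e = #|T| - 4 <-> (has_induced e Gamma1 \/ has_induced e Gamma2)].
Proof.
move=> [esym eirr] conn n5 omega.
have [K [clK cardK maxK]] := maximum_clique_exists e.
have K_gt1 : 1 < #|K| by rewrite cardK omega; lia.
have /cards2P[a [b [ab Kab]]] : #|~: K| == 2.
  by rewrite cardsCs setCK cardK omega subKn //; lia.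
have bounds := local_metric_dim_bounds esym eirr conn clK maxK K_gt1 ab Kab.
have dim4 := local_metric_dim_eq4 esym eirr conn clK maxK K_gt1 ab Kab.
have induced := all_patterns_iff_induced esym eirr clK ab Kab.
have {}dim4 := iff_trans dim4 induced.
split=> //; split=> [dim3 | [nG1 nG2]].
  split=> inducedG; (suff : local_metric_dim e = #|T| - 4 by lia); apply/dim4.
  - by left.
  - by right.
have : local_metric_dim e <> #|T| - 4 by move/dim4 => [/nG1 | /nG2].
by case/andP: bounds; lia.
Qed.
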